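(* Let $n$ and $k$ be positive integers with $k\le n$, let $m=\binom{n}{k}$, let $\nu$ be a vector norm on $\mathbb{C}^n$, and let $\mu$ be an absolute operator norm on $\mathbb{C}^{m\times m}$. Then for every $A\in\mathbb{C}^{n\times n}$, $$\mu(C_k(A)) \le \theta_k(\mu,\nu)\max_{\alpha\subseteq\{1,\ldots,n\},\ |\alpha|=k}\ \prod_{i\in\alpha}\nu(\mathrm{col}_i(A)).$$
   Context: For $A\in\mathbb{C}^{n\times n}$ and $\alpha,\beta\subseteq\{1,\ldots,n\}$, $A(\alpha|\beta)$ is the submatrix with rows indexed by $\alpha$ and columns indexed by $\beta$. The $k$th compound $C_k(A)$ is the $\binom{n}{k}\times\binom{n}{k}$ matrix with entries $\det A(\alpha|\beta)$, $|\alpha|=|\beta|=k$, indexed by $k$-subsets in lexicographic order. $\mathrm{col}_i(B)$ denotes the $i$th column of $B$. For a vector norm $\nu$ on $\mathbb{C}^n$ and a norm $\mu$ on $\mathbb{C}^{m\times m}$, $m=\binom nk$, define $\theta_k(\mu,\nu)=\max\{\mu(C_k(B)): B\in\mathbb{C}^{n\times n},\ \nu(\mathrm{col}_i(B))=1,\ i=1,\ldots,n\}$. An absolute operator norm is a matrix norm induced (as an operator norm) by an absolute vector norm (one with $\|x\|=\||x|\|$). *)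

From HB Require Import structures.
From mathcomp Require Import all_boot all_order all_algebra.
From mathcomp Require Import complex.
From mathcomp Require Import reals.
Set Implicit Arguments. Unset Strict Implicit. Unset Printing Implicit Defensive.
Import Order.TTheory GRing.Theory Num.Theory.
Local Open Scope ring_scope.

Definition cmod {R : rcfType} (z : R[i]) : R := ComplexField.Normc.normc z.

Definition is_vnorm {R : rcfType} (p : nat) (nu : 'cV[R[i]]_p -> R) : Prop :=
  [/\ forall x, 0 <= nu x,
      forall x, nu x = 0 -> x = 0,
      forall (a : R[i]) x, nu (a *: x) = cmod a * nu x &
      forall x y, nu (x + y) <= nu x + nu y].

Definition is_abs_vnorm {R : rcfType} (p : nat) (nu : 'cV[R[i]]_p -> R) : Prop :=
  is_vnorm nu /\ forall x, nu x = nu (map_mx (fun z => `|z|) x).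

Definition induced_by {R : rcfType} (p : nat)
    (mu : 'M[R[i]]_p -> R) (eta : 'cV[R[i]]_p -> R) : Prop :=
  forall M : 'M[R[i]]_p,
    (forall x, eta x = 1 -> eta (M *m x) <= mu M) /\
    (forall b, (forall x, eta x = 1 -> eta (M *m x) <= b) -> mu M <= b).

Definition is_abs_opnorm {R : rcfType} (p : nat) (mu : 'M[R[i]]_p -> R) : Prop :=
  exists eta : 'cV[R[i]]_p -> R, is_abs_vnorm eta /\ induced_by mu eta.

(* all k-element subsequences of s, in lexicographic order w.r.t. the order
   of s (for s increasing, these are the k-subsets in lexicographic order) *)
Fixpoint lexsub (T : Type) (k : nat) (s : seq T) : seq (seq T) :=
  match s with
  | [::] => if k is 0 then [:: [::]] else [::]
  | x :: s' => if k is k'.+1 then map (cons x) (lexsub k' s') ++ lexsub k s'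
               else [:: [::]]
  end.

Definition ksubsets (n k : nat) : seq (seq 'I_n) := lexsub k (enum 'I_n).

Definition oentry {F : nzRingType} (n : nat) (A : 'M[F]_n)
    (oi oj : option 'I_n) : F :=
  match oi, oj with Some i, Some j => A i j | _, _ => 0 end.

Definition subm {F : nzRingType} (n k : nat) (A : 'M[F]_n)
    (alpha beta : seq 'I_n) : 'M[F]_k :=
  \matrix_(r < k, c < k) oentry A (onth alpha r) (onth beta c).

Definition compound {F : comNzRingType} (n k : nat) (A : 'M[F]_n)
    : 'M[F]_('C(n, k)) :=
  \matrix_(i < 'C(n, k), j < 'C(n, k))
    \det (subm k A (nth [::] (ksubsets n k) i) (nth [::] (ksubsets n k) j)).

Definition theta {R : realType} (n k : nat)
    (mu : 'M[R[i]]_('C(n, k)) -> R) (nu : 'cV[R[i]]_n -> R) : R :=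
  sup (fun t : R => exists B : 'M[R[i]]_n,
          (forall i, nu (col i B) = 1) /\ t = mu (compound k B)).

(* Write A = B D with D = diag(nu(col_j A)) and B with nu-unit columns (a zero column
   of A may be replaced by any unit vector). Minors of B D pick up the diagonal entries
   of D, so C_k(A) = C_k(B) C_k(D) with C_k(D) diagonal, its entries being the products
   prod_(i in alpha) nu(col_i A), all between 0 and the maximum in the statement.
   An absolute norm is monotone, so the operator norm it induces satisfies
   mu(M D') <= mu(M) max D' for a nonnegative diagonal D'; and mu(C_k(B)) <= theta.
   The latter needs theta to be a genuine supremum: by equivalence of norms in finite
   dimension a matrix with nu-unit columns has bounded entries, hence a bounded compound. *)

From HB Require Import structures.
From mathcomp Require Import all_boot all_order all_algebra.
From mathcomp Require Import perm complex reals.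
From mathcomp Require Import boolp classical_sets topology normedtype.
From mathcomp Require Import matrix_normedtype derive ring lra.
Set Implicit Arguments. Unset Strict Implicit. Unset Printing Implicit Defensive.
Import Order.TTheory GRing.Theory Num.Theory.
Import numFieldTopology.Exports numFieldNormedType.Exports.
Local Open Scope ring_scope.
Local Open Scope complex_scope.

Section ComplexModulus.
Variable R : rcfType.
Implicit Types z w : R[i].

Lemma cmodE z : (cmod z)%:C = `|z|. Proof. by []. Qed.

Lemma cmod_ge0 z : 0 <= cmod z. Proof. by rewrite -ler0c cmodE. Qed.

Lemma cmodM z w : cmod (z * w) = cmod z * cmod w.
Proof. by apply: complexI; rewrite rmorphM /= !cmodE normrM. Qed.

Lemma cmodD z w : cmod (z + w) <= cmod z + cmod w.
Proof. exact: le_normcD. Qed.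

Lemma cmodN z : cmod (- z) = cmod z.
Proof. by apply: complexI; rewrite !cmodE normrN. Qed.

Lemma cmod0 : cmod (0 : R[i]) = 0.
Proof. by apply: complexI; rewrite cmodE normr0. Qed.

Lemma cmod1 : cmod (1 : R[i]) = 1.
Proof. by apply: complexI; rewrite cmodE normr1. Qed.

Lemma cmodR (a : R) : cmod a%:C = `|a|.
Proof. by rewrite /cmod /= expr0n /= addr0 sqrtr_sqr. Qed.

Lemma cmod_sum (I : Type) (r : seq I) (P : pred I) (F : I -> R[i]) :
  cmod (\sum_(i <- r | P i) F i) <= \sum_(i <- r | P i) cmod (F i).
Proof.
elim/big_rec2: _ => [|i y1 y2 _ IH]; first by rewrite cmod0.
by apply: le_trans (cmodD _ _) _; rewrite lerD2l.
Qed.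

Lemma cmod_prod (I : Type) (r : seq I) (P : pred I) (F : I -> R[i]) :
  cmod (\prod_(i <- r | P i) F i) = \prod_(i <- r | P i) cmod (F i).
Proof. by elim/big_rec2: _ => [|i y1 y2 _ <-]; rewrite ?cmod1 ?cmodM. Qed.

Lemma cmod_le_ReIm (a b : R) : cmod (a +i* b) <= `|a| + `|b|.
Proof.
have -> : a +i* b = a%:C + b%:C * 'i.
  by apply/eqP; rewrite eq_complex /= !(mulr0, mul0r, mulr1, addr0, subr0, add0r, eqxx).
apply: le_trans (cmodD _ _) _.
have cmod_i : cmod 'i = 1 :> R by rewrite /cmod /= expr0n expr1n add0r sqrtr1.
by rewrite cmodM !cmodR cmod_i mulr1.
Qed.
End ComplexModulus.

Lemma delta_mx_neq0 (R : nzRingType) m n (i : 'I_m) (j : 'I_n) :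
  delta_mx i j != 0 :> 'M[R]_(m, n).
Proof. by apply/negP => /eqP /matrixP /(_ i j) /eqP; rewrite !mxE !eqxx oner_eq0. Qed.

Section VectorNorm.
Variables (R : rcfType) (p : nat) (nu : 'cV[R[i]]_p -> R).
Hypothesis nu_norm : is_vnorm nu.

Lemma vnorm_ge0 x : 0 <= nu x. Proof. by case: nu_norm. Qed.
Lemma vnorm_eq0 x : nu x = 0 -> x = 0. Proof. by case: nu_norm => _ + _ _; apply. Qed.
Lemma vnormZ a x : nu (a *: x) = cmod a * nu x. Proof. by case: nu_norm => _ _ + _; apply. Qed.
Lemma vnormD x y : nu (x + y) <= nu x + nu y. Proof. by case: nu_norm => _ _ _; apply. Qed.

Lemma vnormZR (a : R) x : 0 <= a -> nu (a%:C *: x) = a * nu x.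
Proof. by move=> a0; rewrite vnormZ cmodR ger0_norm. Qed.

Lemma vnorm0 : nu 0 = 0.
Proof. by rewrite -(scale0r (0 : 'cV_p)) vnormZ cmod0 mul0r. Qed.

Lemma vnormN x : nu (- x) = nu x.
Proof. by rewrite -scaleN1r vnormZ cmodN cmod1 mul1r. Qed.

Lemma vnorm_sum (I : Type) (r : seq I) (P : pred I) (F : I -> 'cV[R[i]]_p) :
  nu (\sum_(i <- r | P i) F i) <= \sum_(i <- r | P i) nu (F i).
Proof.
elim/big_rec2: _ => [|i y1 y2 _ IH]; first by rewrite vnorm0.
by apply: le_trans (vnormD _ _) _; rewrite lerD2l.
Qed.

Lemma vnorm_le_coord x : nu x <= \sum_(j < p) cmod (x j 0) * nu (delta_mx j 0).
Proof.
rewrite {1}(matrix_sum_delta x); under eq_bigr do rewrite big_ord1.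
by apply: le_trans (vnorm_sum _ _ _) _; apply: ler_sum => j _; rewrite vnormZ.
Qed.

Lemma ler_vnorm_dist x y : `|nu x - nu y| <= nu (x - y).
Proof.
have := vnormD (x - y) y; have := vnormD (y - x) x.
rewrite !subrK -opprB vnormN ler_norml => h1 h2.
by apply/andP; split; lra.
Qed.

Lemma vnorm_normalize x : x != 0 -> nu ((nu x)^-1%:C *: x) = 1.
Proof.
move=> x0; have nux : nu x != 0 by apply: contra x0 => /eqP /vnorm_eq0 ->.
by rewrite vnormZR ?invr_ge0 ?vnorm_ge0 // mulVf.
Qed.

End VectorNorm.

Lemma lipschitz_continuous (R : realFieldType) (V : normedModType R) (f : V -> R) (L : R) :
  (forall x y, `|f x - f y| <= L * `|x - y|) -> continuous f.
Proof.
move=> fL x; apply/cvgrPdist_le => e e0.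
have d0 : 0 < e / (`|L| + 1) by rewrite divr_gt0 // ltr_wpDl.
near=> y; apply: le_trans (fL x y) _.
have xy : `|x - y| <= e / (`|L| + 1).
  by near: y; exact: (@cvgr_dist_le _ _ _ (nbhs x) _ id x (@cvg_id _ (nbhs x)) _ d0).
apply: le_trans (ler_wpM2r (normr_ge0 _) (ler_norm L)) _.
apply: le_trans (ler_wpM2l (normr_ge0 _) xy) _.
by rewrite mulrCA ger_pMr // ler_pdivrMr ?mul1r ?lerDl // ltr_wpDl.
Unshelve. all: by end_near.
Qed.

Lemma normr_entry_le (R : realDomainType) m n (M : 'M[R]_(m, n)) i j :
  `|M i j| <= `|M|.
Proof.
rewrite [leRHS]/Num.Def.normr /= mx_normrE.
by apply/bigmax_geP; right; exists (i, j).
Qed.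

Section Realification.
Variables (R : rcfType) (p : nat).

Definition complexify (v : 'rV[R]_(p + p)) : 'cV[R[i]]_p :=
  \col_j (v 0 (lshift p j) +i* v 0 (rshift p j)).

Definition realify (x : 'cV[R[i]]_p) : 'rV[R]_(p + p) :=
  row_mx (\row_j complex.Re (x j 0)) (\row_j complex.Im (x j 0)).

Lemma realifyK : cancel realify complexify.
Proof.
move=> x; apply/matrixP => i k.
by rewrite (ord1 k) mxE row_mxEl row_mxEr !mxE; case: (x i 0).
Qed.

Lemma complexifyK : cancel complexify realify.
Proof.
move=> v; apply/rowP => i.
by case: (split_ordP i) => j ->; rewrite ?row_mxEl ?row_mxEr !mxE.
Qed.

Lemma complexify_eq0 v : complexify v = 0 -> v = 0.
Proof.
move=> v0; rewrite -(complexifyK v) v0; apply/rowP => i.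
by case: (split_ordP i) => j ->; rewrite ?row_mxEl ?row_mxEr !mxE.
Qed.

Lemma complexifyB v w : complexify (v - w) = complexify v - complexify w.
Proof. by apply/matrixP => i k; rewrite !mxE. Qed.

Lemma complexifyZ (a : R) v : complexify (a *: v) = a%:C *: complexify v.
Proof.
apply/matrixP => i k; rewrite !mxE; apply/eqP.
by rewrite eq_complex /= !(mul0r, subr0, addr0) !eqxx.
Qed.

Lemma cmod_complexify_le v j : cmod (complexify v j 0) <= 2 * `|v|.
Proof.
rewrite mxE; apply: le_trans (cmod_le_ReIm _ _) _.
by rewrite mulr2n mulrDl mul1r lerD // normr_entry_le.
Qed.

End Realification.

Arguments complexify {R p}.
Arguments realify {R p}.

Section NormEquivalence.
Variables (R : realType) (p : nat) (nu : 'cV[R[i]]_p -> R).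
Hypothesis nu_norm : is_vnorm nu.
Local Open Scope classical_set_scope.

Lemma vnorm_complexify_le v :
  nu (complexify v) <= (2 * \sum_(j < p) nu (delta_mx j 0)) * `|v|.
Proof.
apply: le_trans (vnorm_le_coord nu_norm _) _.
rewrite mulrAC big_distrr /= ler_sum // => j _.
by rewrite ler_wpM2r ?cmod_complexify_le ?(vnorm_ge0 nu_norm).
Qed.

Lemma vnorm_complexify_continuous : continuous (nu \o complexify).
Proof.
apply: (@lipschitz_continuous _ _ _ (2 * \sum_(j < p) nu (delta_mx j 0))) => v w /=.
by apply: le_trans (ler_vnorm_dist nu_norm _ _) _; rewrite -complexifyB vnorm_complexify_le.
Qed.

(* [nu \o complexify] attains a positive minimum on the compact unit sphere of R^(2p). *)
Lemma vnorm_realify_lower : (0 < p)%N ->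
  exists2 m, 0 < m & forall x, m * `|realify x| <= nu x.
Proof.
move=> p_gt0; pose S := [set v : 'rV[R]_(p + p) | `|v| = 1].
have normalize (v : 'rV[R]_(p + p)) : v != 0 -> S (`|v|^-1 *: v).
  by move=> v0; rewrite /S /= normrZ normfV normr_id mulVf // normr_eq0.
have S0 : S !=set0.
  by eexists; exact/normalize/(delta_mx_neq0 _ 0 (lshift p (Ordinal p_gt0))).
have S_compact : compact S.
  apply: bounded_closed_compact.
    by exists 1; split => // M M1 v /= ->; exact: ltW.
  by apply: preimage_closed (@closed_eq _ 1) => v _; exact: norm_continuous.
have [v0 v0S v0_min] : exists2 v0, v0 \in S & forall v, v \in S ->
    nu (complexify v0) <= nu (complexify v).
  apply: EVT_min_rV S0 S_compact _.
  exact: continuous_subspaceT vnorm_complexify_continuous.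
have v0_neq0 : v0 != 0.
  apply: contraTneq v0S => ->; apply/negP.
  by rewrite in_setE /S /= normr0 => /esym/eqP; rewrite oner_eq0.
exists (nu (complexify v0)).
  rewrite lt_def (vnorm_ge0 nu_norm) andbT; apply: contra v0_neq0.
  by move=> /eqP /(vnorm_eq0 nu_norm) /complexify_eq0 ->.
move=> x; have [->|xv0] := eqVneq (realify x) 0.
  by rewrite normr0 mulr0 (vnorm_ge0 nu_norm).
have := v0_min _ (mem_set (normalize _ xv0)).
rewrite /= complexifyZ realifyK vnormZR ?invr_ge0 // mulrC.
by rewrite ler_pdivlMr ?normr_gt0.
Qed.

Lemma vnorm_coord_bound :
  exists2 c, 0 < c & forall (x : 'cV[R[i]]_p) j, cmod (x j 0) <= c * nu x.
Proof.
have [p0|p_gt0] := posnP p.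
  by exists 1 => // x j; have := ltn_ord j; rewrite [X in (_ < X)%N]p0.
have [m m_gt0 m_lower] := vnorm_realify_lower p_gt0.
exists (2 / m) => [|x j]; first by rewrite divr_gt0.
rewrite -{1}(realifyK x); apply: le_trans (cmod_complexify_le _ _) _.
by rewrite -mulrA ler_pM2l // ler_pdivlMl // mulrC.
Qed.

End NormEquivalence.

Section AbsoluteNorm.
Variables (R : rcfType) (q : nat) (eta : 'cV[R[i]]_q -> R).
Hypothesis eta_abs : is_abs_vnorm eta.
Let eta_norm : is_vnorm eta := proj1 eta_abs.
Implicit Types (x y : 'cV[R[i]]_q) (j : 'I_q).

Lemma abs_vnorm_flip y j : eta (\col_i (if i == j then - y i 0 else y i 0)) = eta y.
Proof.
case: eta_abs => _ ->; rewrite [RHS](proj2 eta_abs); congr eta.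
by apply/matrixP => i k; rewrite !mxE (ord1 k); case: eqP; rewrite ?normrN.
Qed.

(* Scaling coordinate [j] by [t] gives [(1+t)/2 y + (1-t)/2 y'], where [y'] is [y]
   with coordinate [j] negated, and [eta y' = eta y]. *)
Lemma abs_vnorm_scale_coord y j (t : R) : 0 <= t <= 1 ->
  eta (\col_i (if i == j then t%:C * y i 0 else y i 0)) <= eta y.
Proof.
move=> /andP[t0 t1]; pose a := (1 + t) / 2; pose b := (1 - t) / 2.
have a0 : 0 <= a by rewrite divr_ge0 //; lra.
have b0 : 0 <= b by rewrite divr_ge0 //; lra.
have ab1 : a + b = 1 by rewrite /a /b; field.
have abt : a - b = t by rewrite /a /b; field.
have -> : \col_i (if i == j then t%:C * y i 0 else y i 0) =
    a%:C *: y + b%:C *: \col_i (if i == j then - y i 0 else y i 0).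
  apply/matrixP => i k; rewrite (ord1 k) !mxE; case: eqP => _.
    by rewrite mulrN -mulrBl -rmorphB /= abt.
  by rewrite -mulrDl -rmorphD /= ab1 mul1r.
apply: le_trans (vnormD eta_norm _ _) _.
by rewrite !vnormZR // abs_vnorm_flip -mulrDl ab1 mul1r.
Qed.

Lemma abs_vnorm_diag_contract (t : 'I_q -> R) x : (forall i, 0 <= t i <= 1) ->
  eta (diag_mx (\row_i (t i)%:C) *m x) <= eta x.
Proof.
move=> t01; pose y m := \col_i (if (i < m)%N then (t i)%:C * x i 0 else x i 0).
have y_le m : eta (y m) <= eta x.
  elim: m => [|m IH].
    by rewrite (_ : y 0%N = x) ?lexx //; apply/matrixP => i k; rewrite !mxE ltn0 (ord1 k).
  apply: le_trans IH; have [m_lt|m_ge] := ltnP m q; last first.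
    rewrite (_ : y m.+1 = y m) ?lexx //; apply/matrixP => i k.
    by rewrite !mxE (leq_trans (ltn_ord i) m_ge) (leq_trans (ltn_ord i) (leqW m_ge)).
  pose j := Ordinal m_lt.
  have -> : y m.+1 = \col_i (if i == j then (t j)%:C * y m i 0 else y m i 0).
    apply/matrixP => i k; rewrite !mxE ltnS leq_eqVlt.
    have [->|ne] := eqVneq i j; first by rewrite eqxx ltnn.
    by rewrite (_ : (i == m :> nat) = false) //; exact/negbTE.
  exact: abs_vnorm_scale_coord.
rewrite (_ : _ *m x = y q) //; apply/matrixP => i k.
by rewrite mul_diag_mx !mxE ltn_ord (ord1 k).
Qed.

Lemma abs_vnorm_diag_le (t : 'I_q -> R) (c : R) x :
  0 <= c -> (forall i, 0 <= t i <= c) ->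
  eta (diag_mx (\row_i (t i)%:C) *m x) <= c * eta x.
Proof.
move=> c0 t0c; have [c_eq0|c_neq0] := eqVneq c 0.
  suff -> : diag_mx (\row_i (t i)%:C) *m x = 0 by rewrite vnorm0 // c_eq0 mul0r.
  apply/matrixP => i k; rewrite mul_diag_mx !mxE.
  by have := t0c i; rewrite c_eq0 -eq_le => /eqP <-; rewrite mul0r.
have c_gt0 : 0 < c by rewrite lt_def c_neq0.
have -> : diag_mx (\row_i (t i)%:C) = c%:C *: diag_mx (\row_i (t i / c)%:C).
  apply/matrixP => i j; rewrite !mxE; case: eqP => _ /=; last by rewrite !mulr0n mulr0.
  by rewrite !mulr1n -rmorphM /= mulrCA divff ?mulr1.
rewrite -scalemxAl vnormZR // ler_pM2l //; apply: abs_vnorm_diag_contract => i.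
by have /andP[ti0 tic] := t0c i; rewrite divr_ge0 // ler_pdivrMr // mul1r.
Qed.

End AbsoluteNorm.

Section OperatorNorm.
Variables (R : rcfType) (q : nat) (mu : 'M[R[i]]_q -> R) (eta : 'cV[R[i]]_q -> R).
Hypotheses (eta_norm : is_vnorm eta) (mu_eta : induced_by mu eta).

Lemma opnorm_mulmx_le M y : eta (M *m y) <= mu M * eta y.
Proof.
have [->|y0] := eqVneq y 0; first by rewrite mulmx0 !vnorm0 // mulr0.
have eta_y_gt0 : 0 < eta y.
  by rewrite lt_def vnorm_ge0 // andbT; apply: contra y0 => /eqP /(vnorm_eq0 eta_norm) ->.
have := proj1 (mu_eta M) _ (vnorm_normalize eta_norm y0).
by rewrite -scalemxAr vnormZR ?invr_ge0 ?vnorm_ge0 // mulrC ler_pdivrMr.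
Qed.

End OperatorNorm.

Lemma abs_opnorm_mul_diag_le (R : rcfType) q (mu : 'M[R[i]]_q -> R) M
    (t : 'I_q -> R) (c : R) :
  is_abs_opnorm mu -> 0 <= c -> (forall i, 0 <= t i <= c) ->
  mu (M *m diag_mx (\row_i (t i)%:C)) <= mu M * c.
Proof.
move=> [eta [eta_abs mu_eta]] c0 t0c; have eta_norm := proj1 eta_abs.
apply: (proj2 (mu_eta _)) => x eta_x.
have mu_ge0 : 0 <= mu M by apply: le_trans (proj1 (mu_eta M) x eta_x); exact: vnorm_ge0.
rewrite -mulmxA; apply: le_trans (opnorm_mulmx_le eta_norm mu_eta _ _) _.
by rewrite ler_wpM2l // -[c]mulr1 -eta_x abs_vnorm_diag_le.
Qed.

Lemma opnorm_entry_bound (R : realType) q (mu : 'M[R[i]]_q -> R) (eta : 'cV[R[i]]_q -> R) :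
  is_vnorm eta -> induced_by mu eta ->
  exists K, forall (M : 'M[R[i]]_q) c, (forall i j, cmod (M i j) <= c) -> mu M <= c * K.
Proof.
move=> eta_norm mu_eta; have [c' c'_gt0 coord_le] := vnorm_coord_bound eta_norm.
exists (\sum_(i < q) (c' *+ q) * eta (delta_mx i 0)) => M c M_le.
apply: (proj2 (mu_eta M)) => x eta_x.
apply: le_trans (vnorm_le_coord eta_norm _) _.
rewrite mulr_sumr ler_sum // => i _; rewrite mulrA ler_wpM2r ?vnorm_ge0 //.
rewrite mxE mulrnAr -[X in _ *+ X]card_ord -sumr_const.
apply: le_trans (cmod_sum _ _ _) _; apply: ler_sum => j _.
rewrite cmodM ler_pM ?cmod_ge0 //.
by have := coord_le x j; rewrite eta_x mulr1.
Qed.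

Lemma cmod_det_le (R : rcfType) k (M : 'M[R[i]]_k) (c : R) :
  (forall i j, cmod (M i j) <= c) -> cmod (\det M) <= k`!%:R * c ^+ k.
Proof.
move=> M_le; rewrite -card_Sn mulr_natl -sumr_const.
apply: le_trans (cmod_sum _ _ _) _; apply: ler_sum => s _.
rewrite cmodM (_ : cmod _ = 1) ?mul1r; last by case: odd_perm; rewrite ?cmodN cmod1.
rewrite cmod_prod -[k in c ^+ k]card_ord -prodr_const.
by apply: ler_prod => i _; rewrite cmod_ge0 M_le.
Qed.

Lemma cmod_subm_le (R : rcfType) n k (B : 'M[R[i]]_n) alpha beta (c : R) :
  0 <= c -> (forall i j, cmod (B i j) <= c) ->
  forall i j, cmod (subm k B alpha beta i j) <= c.
Proof.
move=> c0 B_le i j; rewrite mxE /oentry.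
by case: (onth alpha i) => [a|]; case: (onth beta j) => [b|]; rewrite ?cmod0.
Qed.

Lemma size_lexsub (T : Type) k (s : seq T) : size (lexsub k s) = 'C(size s, k).
Proof.
elim: s k => [|x s IH] [|k] //=.
by rewrite size_cat size_map !IH binS addnC.
Qed.

Lemma mem_lexsub (T : eqType) k (s t : seq T) :
  t \in lexsub k s -> size t = k /\ subseq t s.
Proof.
elim: s k t => [|x s IH] [|k] t //=; rewrite ?inE; try by move=> /eqP ->.
rewrite mem_cat => /orP[/mapP[t' /IH[size_t' sub_t'] ->] | /IH[size_t sub_t]].
  by split; [rewrite /= size_t' | rewrite /= eqxx].
by split => //; exact: subseq_trans sub_t (subseq_cons s x).
Qed.

Definition ksubset n k (b : 'I_('C(n, k))) : seq 'I_n := nth [::] (ksubsets n k) b.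

Lemma ksubset_spec n k (b : 'I_('C(n, k))) :
  size (ksubset b) = k /\ uniq (ksubset b).
Proof.
have /mem_lexsub[size_b sub_b] : ksubset b \in ksubsets n k.
  by apply: mem_nth; rewrite size_lexsub size_enum_ord.
by split => //; exact: subseq_uniq sub_b (enum_uniq _).
Qed.

Lemma prod_onth (R : comNzRingType) (T : Type) k (s : seq T) (d : T -> R) :
  size s = k ->
  \prod_(c < k) (if onth s c is Some j then d j else 0) = \prod_(j <- s) d j.
Proof.
move=> <-; elim: s => [|x s IH]; first by rewrite big_ord0 big_nil.
by rewrite big_ord_recl big_cons /= -IH.
Qed.

Section CompoundDiag.
Variable F : comNzRingType.

Lemma subm_mul_diag n k (B : 'M[F]_n) (r : 'rV[F]_n) alpha beta :
  subm k (B *m diag_mx r) alpha beta =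
  subm k B alpha beta *m diag_mx (\row_c (if onth beta c is Some j then r 0 j else 0)).
Proof.
apply/matrixP => i j; rewrite [in RHS]mul_mx_diag !mxE.
by case: (onth alpha i) => [a|]; case: (onth beta j) => [b|] /=;
  rewrite ?mul_mx_diag ?mxE ?mul0r ?mulr0.
Qed.

Lemma compound_mul_diag n k (B : 'M[F]_n) (r : 'rV[F]_n) :
  compound k (B *m diag_mx r) =
  compound k B *m diag_mx (\row_b \prod_(j <- ksubset b) r 0 j).
Proof.
apply/matrixP => a b; rewrite mul_mx_diag !mxE subm_mul_diag det_mulmx det_diag.
have [size_b _] := ksubset_spec b.
by congr (_ * _); rewrite -(prod_onth _ size_b); apply: eq_bigr => c _; rewrite mxE.
Qed.

End CompoundDiag.

Lemma ksubset_prod_le_max (R : realDomainType) n k (d : 'I_n -> R) (b : 'I_('C(n, k))) :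
  \prod_(j <- ksubset b) d j <=
    \big[Num.max/0]_(alpha : {set 'I_n} | #|alpha| == k) \prod_(i in alpha) d i.
Proof.
have [size_b uniq_b] := ksubset_spec b.
have card_b : #|[set j in ksubset b]| == k.
  by rewrite cardsE; move/card_uniqP: uniq_b => ->; rewrite size_b.
have -> : \prod_(j <- ksubset b) d j = \prod_(j in [set j in ksubset b]) d j.
  by rewrite big_uniq //; apply: eq_bigl => j; rewrite inE.
exact: (le_bigmax_cond 0 (fun alpha : {set 'I_n} => \prod_(i in alpha) d i) card_b).
Qed.

Lemma unit_columns_factor (R : rcfType) n (nu : 'cV[R[i]]_n -> R) (A : 'M[R[i]]_n) :
  is_vnorm nu -> exists2 B : 'M[R[i]]_n,
    forall j, nu (col j B) = 1 & A = B *m diag_mx (\row_j (nu (col j A))%:C).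
Proof.
move=> nu_norm; pose v j := if col j A == 0 then delta_mx j 0 else col j A.
have v_neq0 j : v j != 0.
  by rewrite /v; case: ifP => [_|/negbT //]; exact: delta_mx_neq0.
exists (\matrix_(i, j) ((nu (v j))^-1%:C * v j i 0)) => [j|].
  rewrite -(vnorm_normalize nu_norm (v_neq0 j)); congr nu.
  by apply/matrixP => i k; rewrite !mxE (ord1 k).
apply/matrixP => i j; rewrite mul_mx_diag !mxE /v.
have [Aj0|Aj_neq0] := eqVneq (col j A) 0.
  by rewrite Aj0 vnorm0 // mulr0; have /matrixP /(_ i 0) := Aj0; rewrite !mxE.
rewrite mxE mulrAC -rmorphM /= mulVf ?mul1r //.
by apply: contra Aj_neq0 => /eqP /(vnorm_eq0 nu_norm) ->.
Qed.

Section Theta.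
Variables (R : realType) (n k : nat).
Variables (nu : 'cV[R[i]]_n -> R) (mu : 'M[R[i]]_('C(n, k)) -> R).
Hypotheses (nu_norm : is_vnorm nu) (mu_opnorm : is_abs_opnorm mu).

Lemma compound_unit_columns_bounded : exists K, forall B : 'M[R[i]]_n,
  (forall j, nu (col j B) = 1) -> mu (compound k B) <= K.
Proof.
have [eta [[eta_norm _] mu_eta]] := mu_opnorm.
have [c c_gt0 coord_le] := vnorm_coord_bound nu_norm.
have [K K_bound] := opnorm_entry_bound eta_norm mu_eta.
exists (k`!%:R * c ^+ k * K) => B B_unit; apply: K_bound => a b.
rewrite mxE; apply: cmod_det_le; apply: cmod_subm_le (ltW c_gt0) _ => i j.
by have := coord_le (col j B) i; rewrite B_unit mulr1 mxE.
Qed.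

Lemma compound_le_theta (B : 'M[R[i]]_n) :
  (forall j, nu (col j B) = 1) -> mu (compound k B) <= theta mu nu.
Proof.
move=> B_unit; apply: sup_upper_bound; last by exists B.
split; first by exists (mu (compound k B)), B.
have [K K_bound] := compound_unit_columns_bounded.
by exists K => _ [B' [B'_unit ->]]; exact: K_bound.
Qed.

End Theta.

Theorem theorem2p1 (R : realType) (n k : nat) (hk0 : (0 < k)%N) (hkn : (k <= n)%N)
    (nu : 'cV[R[i]]_n -> R) (mu : 'M[R[i]]_('C(n, k)) -> R)
    (hnu : is_vnorm nu) (hmu : is_abs_opnorm mu) (A : 'M[R[i]]_n) :
  mu (compound k A) <=
    theta mu nu *
      \big[Num.max/0]_(alpha : {set 'I_n} | #|alpha| == k)
         \prod_(i in alpha) nu (col i A).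
Proof.
have [B B_unit A_eq] := unit_columns_factor A hnu.
rewrite {1}A_eq compound_mul_diag.
pose d j := nu (col j A).
have -> : \row_(b < 'C(n, k)) \prod_(j <- ksubset b) (\row_j (d j)%:C) 0 j =
          \row_b (\prod_(j <- ksubset b) d j)%:C.
  by apply/rowP => b; rewrite !mxE rmorph_prod; apply: eq_bigr => j _; rewrite mxE.
pose m := \big[Num.max/0]_(alpha : {set 'I_n} | #|alpha| == k) \prod_(i in alpha) d i.
have m_ge0 : 0 <= m := bigmax_ge_id _ _ _ _.
apply: le_trans (abs_opnorm_mul_diag_le _ hmu m_ge0 _) _.
  move=> b; rewrite ksubset_prod_le_max andbT.
  by apply: prodr_ge0 => j _; exact: vnorm_ge0.
by rewrite ler_wpM2r // compound_le_theta.
Qed.
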